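(* Every normal subgroup of $G_{\mathtt{ALD}}$ that contains the image $\mathrm{sh}_0(G_{\mathtt{ALD}})$ contains all generators $S_\alpha$ and $A_\alpha$ such that the address $\alpha$ contains at least one $0$.
   Context: Addresses are finite sequences over $\{0,1\}$, $\varepsilon$ empty, concatenation by juxtaposition; incomparable means neither is a prefix of the other. $G_{\mathtt{ALD}}$ is the group generated by $S_\alpha,A_\alpha$ ($\alpha\in\{0,1\}^*$) subject to the relations, with $X,Y\in\{S,A\}$ and arbitrary addresses $\alpha,\beta,\delta$ ($\delta$ possibly empty): $X_\alpha Y_\beta=Y_\beta X_\alpha$ for $\alpha,\beta$ incomparable; $X_{\alpha0\delta}S_\alpha=S_\alpha X_{\alpha00\delta}X_{\alpha10\delta}$; $X_{\alpha10\delta}S_\alpha=S_\alpha X_{\alpha01\delta}$; $X_{\alpha11\delta}S_\alpha=S_\alpha X_{\alpha11\delta}$; $X_{\alpha0\delta}A_\alpha=A_\alpha X_{\alpha00\delta}$; $X_{\alpha10\delta}A_\alpha=A_\alpha X_{\alpha01\delta}$; $X_{\alpha11\delta}A_\alpha=A_\alpha X_{\alpha1\delta}$; $S_\alpha S_{\alpha1}S_\alpha=S_{\alpha1}S_\alpha S_{\alpha1}S_{\alpha0}$; $S_\alpha S_{\alpha1}A_\alpha=A_{\alpha1}S_\alpha S_{\alpha0}$; $A_\alpha S_\alpha=S_{\alpha1}S_\alpha A_{\alpha1}A_{\alpha0}$. $\mathrm{sh}_0$ is the endomorphism with $S_\alpha\mapsto S_{0\alpha}$, $A_\alpha\mapsto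 A_{0\alpha}$. *)

(* The group G_ALD is given by an infinite
   presentation; we model it concretely as words in the generators and
   their inverses modulo the congruence generated by free cancellation and
   the defining relations. Subsets of G_ALD are predicates on words that are
   invariant under this congruence. *)
From mathcomp Require Import all_boot.
Set Implicit Arguments. Unset Strict Implicit. Unset Printing Implicit Defensive.

(* addresses: finite sequences over {0,1}; 0 = false, 1 = true *)
Definition addr := seq bool.

Inductive kind := KS | KA.

Definition gen := (kind * addr)%type.
(* a letter: a generator together with an exponent flag (true = inverse) *)
Definition letter := (gen * bool)%type.
Definition word := seq letter.

Definition S_ (a : addr) : letter := ((KS, a), false).
Definition A_ (a : addr) : letter := ((KA, a), false).
Definition X_ (k : kind) (a : addr) : letter := ((k, a), false).

Definition linv (x : letter) : letter := (x.1, ~~ x.2).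
Definition winv (w : word) : word := rev (map linv w).

Definition incomparable (a b : addr) : bool := ~~ prefix a b && ~~ prefix b a.

Inductive ald_rel : word -> word -> Prop :=
| R_comm k l a b : incomparable a b ->
    ald_rel [:: X_ k a; X_ l b] [:: X_ l b; X_ k a]
| R_S0 k a d : ald_rel [:: X_ k (a ++ false :: d); S_ a]
                        [:: S_ a; X_ k (a ++ false :: false :: d); X_ k (a ++ true :: false :: d)]
| R_S10 k a d : ald_rel [:: X_ k (a ++ true :: false :: d); S_ a]
                        [:: S_ a; X_ k (a ++ false :: true :: d)]
| R_S11 k a d : ald_rel [:: X_ k (a ++ true :: true :: d); S_ a]
                        [:: S_ a; X_ k (a ++ true :: true :: d)]
| R_A0 k a d : ald_rel [:: X_ k (a ++ false :: d); A_ a]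
                        [:: A_ a; X_ k (a ++ false :: false :: d)]
| R_A10 k a d : ald_rel [:: X_ k (a ++ true :: false :: d); A_ a]
                        [:: A_ a; X_ k (a ++ false :: true :: d)]
| R_A11 k a d : ald_rel [:: X_ k (a ++ true :: true :: d); A_ a]
                        [:: A_ a; X_ k (a ++ true :: d)]
| R_SSS a : ald_rel [:: S_ a; S_ (rcons a true); S_ a]
                    [:: S_ (rcons a true); S_ a; S_ (rcons a true); S_ (rcons a false)]
| R_SSA a : ald_rel [:: S_ a; S_ (rcons a true); A_ a]
                    [:: A_ (rcons a true); S_ a; S_ (rcons a false)]
| R_AS a : ald_rel [:: A_ a; S_ a]
                   [:: S_ (rcons a true); S_ a; A_ (rcons a true); A_ (rcons a false)].

Inductive weq : word -> word -> Prop :=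
| weq_refl w : weq w w
| weq_sym u v : weq u v -> weq v u
| weq_trans u v w : weq u v -> weq v w -> weq u w
| weq_cancel u v x : weq (u ++ x :: linv x :: v) (u ++ v)
| weq_rel u v l r : ald_rel l r -> weq (u ++ l ++ v) (u ++ r ++ v).

Definition normal_subgroup (N : word -> Prop) : Prop :=
  [/\ (forall u v, weq u v -> N u -> N v),
      N [::],
      (forall u v, N u -> N v -> N (u ++ v)),
      (forall u, N u -> N (winv u))
    & (forall g u, N u -> N (g ++ u ++ winv g))].

Definition sh0_letter (x : letter) : letter := ((x.1.1, false :: x.1.2), x.2).
Definition sh0 (w : word) : word := map sh0_letter w.

From mathcomp Require Import all_boot.

(* Induct on the address α containing a 0. If α = 0β, then X_α = sh_0(X_β).
   If α = 10β, the relation X_{10β} S_ε = S_ε X_{01β} makes X_α a conjugate of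
   X_{01β} = sh_0(X_{1β}). If α = 11β, the relation X_{11β} A_ε = A_ε X_{1β}
   makes X_α a conjugate of X_{1β}, which lies in N by induction. *)

Section NormalSubgroupContainingSh0.

Variable N : word -> Prop.
Hypothesis normalN : normal_subgroup N.

Lemma normal_rel_conj {x g y : letter} :
  ald_rel [:: x; g] [:: g; y] -> N [:: y] -> N [:: x].
Proof.
case: normalN => weqN _ _ _ conjN rel_xgy Ny.
apply: weqN (conjN [:: g] _ Ny).
apply: weq_trans (weq_sym (weq_rel [::] [:: linv g] rel_xgy)) _.
exact: (weq_cancel [:: x] [::] g).
Qed.

Hypothesis sh0N : forall w : word, N (sh0 w).

Lemma normal_gen_sh0 (k : kind) (a : addr) : N [:: X_ k (false :: a)].
Proof. exact: (sh0N [:: X_ k a]). Qed.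

Lemma normal_gen_with_zero (k : kind) (a : addr) :
  false \in a -> N [:: X_ k a].
Proof.
elim: a k => [|[] d IH] k //; last by move=> _; apply: normal_gen_sh0.
rewrite in_cons /=.
case: d IH => [|[] e] IH // zero_e.
- exact: normal_rel_conj (R_A11 k [::] e) (IH k zero_e).
- exact: normal_rel_conj (R_S10 k [::] e) (normal_gen_sh0 k (true :: e)).
Qed.

End NormalSubgroupContainingSh0.

Theorem lemma4p5 (N : word -> Prop) :
  normal_subgroup N ->
  (forall w : word, N (sh0 w)) ->
  forall (a : addr), false \in a -> N [:: S_ a] /\ N [:: A_ a].
Proof.
move=> normalN sh0N a zero_a.
by split; apply: normal_gen_with_zero.
Qed.
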